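(* Let $r,s\in\mathbb{N}$, $\alpha\in\mathbb{R}^r_{++}$, $p,p_u\in[1,\infty)$, $\rho_u>0$, and $\delta\in\mathbb{R}^r_{++}$. For every $x\in\mathbb{R}^s_+$ and every $u\in\mathbb{R}^{r\times s}_{++}$ with $\|u\|_{p_u}\le\rho_u$, $$\Big[\sum_{l=1}^r\delta_l^p\Big(\sum_{m=1}^s u_{lm}x_m\Big)^{p\alpha_l}\Big]^{1/p}\le\Psi^{\alpha}_{p,p_u}\big(\delta,\rho_u\|x\|_{p_u'}\big).$$ Moreover, if $(\delta,t)\le(\tilde\delta,\tilde t)$ componentwise (with $t,\tilde t>0$), then $\Psi^\alpha_{p,p_u}(\delta,t)\le\Psi^\alpha_{p,p_u}(\tilde\delta,\tilde t)\le\sum_{l=1}^r\tilde\delta_l\tilde t^{\alpha_l}$.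
   Context: $\mathbb{R}_{++}=(0,\infty)$; $\|u\|_{p_u}$ is the entrywise $\ell_{p_u}$ norm; $p_u'=p_u/(p_u-1)$ (with $p_u'=\infty$ if $p_u=1$). For $p,q\ge1$ and $\alpha\in\mathbb{R}^r_{++}$, define $\Psi^\alpha_{p,q}:\mathbb{R}^r_{++}\times\mathbb{R}_{++}\to\mathbb{R}_{++}$ by $$\Psi^{\alpha}_{p,q}(\delta,t)=\Big(\Big[\sum_{l\in J}(\delta_l t^{\alpha_l})^{\frac{pq}{q-\bar\alpha p}}\Big]^{1-\frac{\bar\alpha p}{q}}+\max_{j\in J^c}(\delta_j t^{\alpha_j})^p\Big)^{1/p},$$ where $J=\{l\in[r]:\alpha_l p<q\}$, $J^c=\{l\in[r]:\alpha_l p\ge q\}$, $\bar\alpha=\min_{l\in J}\alpha_l$, and an empty sum or empty maximum is taken to be $0$. *)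

From Stdlib Require Import Reals Lra.
Open Scope R_scope.

(* Real power for nonnegative bases: x^y for x > 0, and 0 for x <= 0
   (so 0^y = 0, the usual convention for y > 0). *)
Definition rpow (x y : R) : R :=
  if Rlt_dec 0 x then Rpower x y else 0.

Fixpoint fsum (n : nat) (f : nat -> R) : R :=
  match n with O => 0 | S k => fsum k f + f k end.

(* max of nonnegative values f 0, ..., f (n-1); empty max = 0. *)
Fixpoint fmax (n : nat) (f : nat -> R) : R :=
  match n with O => 0 | S k => Rmax (fmax k f) (f k) end.

Fixpoint fminP (n : nat) (P : nat -> bool) (a : nat -> R) : option R :=
  match n with
  | O => None
  | S k =>
      let m := fminP k P a in
      if P k then
        match m with None => Some (a k) | Some v => Some (Rmin v (a k)) end
      else m
  end.

Definition inJ (alpha : nat -> R) (p q : R) (l : nat) : bool :=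
  if Rlt_dec (alpha l * p) q then true else false.

(* alpha_bar = min_{l in J} alpha_l (value irrelevant when J is empty) *)
Definition alpha_bar (r : nat) (alpha : nat -> R) (p q : R) : R :=
  match fminP r (inJ alpha p q) alpha with Some v => v | None => 0 end.

Definition Psi (r : nat) (alpha : nat -> R) (p q : R) (delta : nat -> R) (t : R) : R :=
  let ab := alpha_bar r alpha p q in
  rpow
    ( rpow (fsum r (fun l => if inJ alpha p q l
                             then rpow (delta l * rpow t (alpha l)) (p * q / (q - ab * p))
                             else 0))
           (1 - ab * p / q)
    + fmax r (fun j => if inJ alpha p q j then 0
                       else rpow (delta j * rpow t (alpha j)) p) )
    (1 / p).

Definition mat_norm (r s : nat) (q : R) (u : nat -> nat -> R) : R :=
  rpow (fsum r (fun l => fsum s (fun m => rpow (Rabs (u l m)) q))) (1 / q).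

Definition dual_norm (s : nat) (q : R) (x : nat -> R) : R :=
  if Req_EM_T q 1 then fmax s (fun m => Rabs (x m))
  else let q' := q / (q - 1) in
       rpow (fsum s (fun m => rpow (Rabs (x m)) q')) (1 / q').

From Stdlib Require Import Reals Lra Lia.
Open Scope R_scope.

(* With y_l = sum_m u_lm x_m and b_l = ||u_l||_{p_u} / rho_u, Hoelder's inequality gives
   y_l <= b_l T for T = rho_u ||x||_{p_u'}, and ||u||_{p_u} <= rho_u gives
   sum_l b_l^{p_u} <= 1, so every b_l <= 1.  Hence the l-th term is at most
   (delta_l T^{alpha_l})^p b_l^{gamma_l}, where the exponent p alpha_l of b_l may be lowered
   to gamma_l = alpha_bar p on J and to gamma_l = p_u off J.  With th = 1 - alpha_bar p / p_u,
   the sum over J is bounded by Hoelder with exponents 1/th and 1/(1 - th), and the sum over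
   J^c by its largest coefficient, each using sum_l b_l^{p_u} <= 1.  The second claim is
   monotonicity together with superadditivity of t |-> t^k for k >= 1. *)

Lemma rpow_ge0 x y : 0 <= rpow x y.
Proof. unfold rpow; destruct (Rlt_dec 0 x); [left; apply exp_pos | lra]. Qed.

Lemma rpow_pos x y : 0 < x -> rpow x y = Rpower x y.
Proof. intros Hx; unfold rpow; destruct (Rlt_dec 0 x); [reflexivity | lra]. Qed.

Lemma rpow_nonpos x y : x <= 0 -> rpow x y = 0.
Proof. intros Hx; unfold rpow; destruct (Rlt_dec 0 x); [lra | reflexivity]. Qed.

Lemma rpow_0 y : rpow 0 y = 0.
Proof. apply rpow_nonpos; lra. Qed.

Lemma rpow_gt0 x y : 0 < x -> 0 < rpow x y.
Proof. intros Hx; rewrite rpow_pos by exact Hx; apply exp_pos. Qed.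

Lemma rpow_1 x : 0 <= x -> rpow x 1 = x.
Proof.
  intros [Hx | <-]; [rewrite rpow_pos by exact Hx; apply Rpower_1, Hx | apply rpow_0].
Qed.

Lemma rpow_base1 y : rpow 1 y = 1.
Proof. rewrite rpow_pos by lra; unfold Rpower; rewrite ln_1, Rmult_0_r; apply exp_0. Qed.

Lemma rpow_exp0_le1 x : rpow x 0 <= 1.
Proof.
  destruct (Rle_or_lt x 0).
  - rewrite rpow_nonpos by assumption; lra.
  - rewrite rpow_pos by assumption; rewrite Rpower_O by assumption; lra.
Qed.

Lemma rpow_le_base x x' y : 0 <= y -> x <= x' -> rpow x y <= rpow x' y.
Proof.
  intros Hy Hx; destruct (Rle_or_lt x 0).
  - rewrite rpow_nonpos by assumption; apply rpow_ge0.
  - rewrite !rpow_pos by lra; apply Rle_Rpower_l; lra.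
Qed.

Lemma rpow_decr_exp b y y' : 0 <= b <= 1 -> y <= y' -> rpow b y' <= rpow b y.
Proof.
  intros Hb Hy; destruct (Req_dec b 0) as [-> | Hb0]; [rewrite !rpow_0; lra |].
  rewrite !rpow_pos by lra; unfold Rpower.
  assert (ln b <= 0).
  { destruct (Req_dec b 1) as [-> | ]; [rewrite ln_1; lra |].
    rewrite <- ln_1; left; apply ln_increasing; lra. }
  destruct (Req_dec (y' * ln b) (y * ln b)) as [-> | ]; [lra |].
  left; apply exp_increasing; nra.
Qed.

Lemma rpow_mult_base x y z : 0 <= x -> 0 <= y -> rpow (x * y) z = rpow x z * rpow y z.
Proof.
  intros [Hx | <-] [Hy | <-];
    try (rewrite ?Rmult_0_l, ?Rmult_0_r, !rpow_0; ring).
  rewrite !rpow_pos by nra; symmetry; apply Rpower_mult_distr; assumption.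
Qed.

Lemma rpow_rpow x y z : rpow (rpow x y) z = rpow x (y * z).
Proof.
  destruct (Rle_or_lt x 0).
  - rewrite !(rpow_nonpos x) by assumption; apply rpow_0.
  - rewrite (rpow_pos x y), (rpow_pos x (y * z)), rpow_pos by (apply exp_pos || assumption).
    apply Rpower_mult.
Qed.

Lemma rpow_inv x y : 0 < x -> rpow (/ x) y = / rpow x y.
Proof.
  intros Hx; rewrite !rpow_pos by (apply Rinv_0_lt_compat || idtac; assumption).
  unfold Rpower; rewrite ln_Rinv, <- exp_Ropp by assumption; f_equal; ring.
Qed.

Lemma rpow_rpow_inv x q : 0 < q -> 0 <= x -> rpow (rpow x q) (/ q) = x.
Proof. intros Hq Hx; rewrite rpow_rpow, Rinv_r by lra; apply rpow_1, Hx. Qed.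

Lemma rpow_le1 b q : 0 < q -> 0 <= b -> rpow b q <= 1 -> b <= 1.
Proof.
  intros Hq Hb H; rewrite <- (rpow_rpow_inv b q), <- (rpow_base1 (/ q)) by assumption.
  apply rpow_le_base; [left; apply Rinv_0_lt_compat |]; assumption.
Qed.

Lemma rpow_mul_rpow_le_scaled dl y bl T a p :
  0 <= dl -> 0 <= y -> 0 <= bl -> 0 <= T -> 0 <= a -> 0 <= p -> y <= bl * T ->
  rpow dl p * rpow y (p * a) <= rpow (dl * rpow T a) p * rpow bl (p * a).
Proof.
  intros Hd Hy Hb HT Ha Hp HyT.
  rewrite (Rmult_comm p a), <- !rpow_rpow, <- rpow_mult_base by (apply rpow_ge0 || assumption).
  rewrite <- rpow_mult_base by (try apply Rmult_le_pos; apply rpow_ge0 || assumption).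
  apply rpow_le_base; [exact Hp |].
  rewrite Rmult_assoc, <- rpow_mult_base, (Rmult_comm T) by assumption.
  apply Rmult_le_compat_l; [exact Hd |]; apply rpow_le_base; assumption.
Qed.

Lemma weighted_amgm th a b : 0 < th < 1 -> 0 <= a -> 0 <= b ->
  rpow a th * rpow b (1 - th) <= th * a + (1 - th) * b.
Proof.
  intros Hth [Ha | <-]; [| rewrite rpow_0; nra].
  intros [Hb | <-]; [| rewrite rpow_0; nra].
  set (m := th * a + (1 - th) * b).
  assert (Hm : 0 < m) by (unfold m; nra).
  (* concavity of ln, via ln z <= z - 1 at z = a/m and z = b/m *)
  assert (Hln : forall z, 0 < z -> ln z <= z / m - 1 + ln m).
  { intros z Hz.
    pose proof (exp_ineq1_le (ln (z / m))) as H.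
    rewrite exp_ln in H by (apply Rdiv_lt_0_compat; assumption).
    unfold Rdiv in *; rewrite ln_mult, ln_Rinv in H by (try apply Rinv_0_lt_compat; assumption).
    lra. }
  rewrite !rpow_pos by assumption; unfold Rpower; rewrite <- exp_plus, <- (exp_ln m) by assumption.
  assert (Hsum : th * (a / m - 1) + (1 - th) * (b / m - 1) = 0) by (unfold m in *; field; lra).
  pose proof (Hln a Ha); pose proof (Hln b Hb).
  destruct (Req_dec (th * ln a + (1 - th) * ln b) (ln m)) as [-> | ]; [lra |].
  left; apply exp_increasing; nra.
Qed.

Lemma fsum_ext n f g : (forall l, (l < n)%nat -> f l = g l) -> fsum n f = fsum n g.
Proof.
  induction n; intros H; simpl; [reflexivity |].
  rewrite IHn, H; auto; intros; apply H; lia.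
Qed.

Lemma fsum_le n f g : (forall l, (l < n)%nat -> f l <= g l) -> fsum n f <= fsum n g.
Proof.
  induction n; intros H; simpl; [lra |].
  apply Rplus_le_compat; [apply IHn; intros; apply H |apply H]; lia.
Qed.

Lemma fsum_ge0 n f : (forall l, (l < n)%nat -> 0 <= f l) -> 0 <= fsum n f.
Proof.
  induction n; intros H; simpl; [lra |].
  pose proof (H n ltac:(lia)); enough (0 <= fsum n f) by lra; apply IHn; intros; apply H; lia.
Qed.

Lemma fsum_scal n c f : fsum n (fun l => c * f l) = c * fsum n f.
Proof. induction n; simpl; [ring | rewrite IHn; ring]. Qed.

Lemma fsum_plus n f g : fsum n (fun l => f l + g l) = fsum n f + fsum n g.
Proof. induction n; simpl; [ring | rewrite IHn; ring]. Qed.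

Lemma fsum_ge_term n f l :
  (forall l, (l < n)%nat -> 0 <= f l) -> (l < n)%nat -> f l <= fsum n f.
Proof.
  induction n; intros Hf Hl; [lia |]; simpl.
  assert (Hf' : forall l, (l < n)%nat -> 0 <= f l) by (intros; apply Hf; lia).
  destruct (Nat.eq_dec l n) as [-> | ].
  - pose proof (fsum_ge0 n f Hf'); lra.
  - pose proof (IHn Hf' ltac:(lia)); pose proof (Hf n ltac:(lia)); lra.
Qed.

Lemma fsum_eq0_term n f l :
  (forall l, (l < n)%nat -> 0 <= f l) -> fsum n f = 0 -> (l < n)%nat -> f l = 0.
Proof. intros Hf H0 Hl; pose proof (fsum_ge_term n f l Hf Hl); pose proof (Hf l Hl); lra. Qed.

Lemma fmax_ge0 n f : 0 <= fmax n f.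
Proof. induction n; simpl; [lra |]; pose proof (Rmax_l (fmax n f) (f n)); lra. Qed.

Lemma fmax_ge n f l : (l < n)%nat -> f l <= fmax n f.
Proof.
  induction n; intros Hl; [lia |]; simpl.
  destruct (Nat.eq_dec l n) as [-> | ]; [apply Rmax_r |].
  pose proof (IHn ltac:(lia)); pose proof (Rmax_l (fmax n f) (f n)); lra.
Qed.

Lemma fmax_le n f g : (forall l, (l < n)%nat -> f l <= g l) -> fmax n f <= fmax n g.
Proof.
  induction n; intros H; simpl; [lra |].
  assert (fmax n f <= fmax n g) by (apply IHn; intros; apply H; lia).
  pose proof (H n ltac:(lia)); unfold Rmax; repeat destruct Rle_dec; lra.
Qed.

Lemma fsum_mask_plus_fmax_le n (P : nat -> bool) h :
  (forall l, (l < n)%nat -> 0 <= h l) ->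
  fsum n (fun l => if P l then h l else 0) + fmax n (fun l => if P l then 0 else h l)
  <= fsum n h.
Proof.
  induction n; intros Hh; simpl; [lra |].
  pose proof (IHn ltac:(intros; apply Hh; lia)); pose proof (Hh n ltac:(lia)).
  pose proof (fmax_ge0 n (fun l => if P l then 0 else h l)).
  destruct (P n); unfold Rmax; repeat destruct Rle_dec; lra.
Qed.

(* Normalise both sums to 1 and apply weighted AM-GM termwise. *)
Lemma fsum_holder n f g th : 0 < th < 1 ->
  (forall l, (l < n)%nat -> 0 <= f l) -> (forall l, (l < n)%nat -> 0 <= g l) ->
  fsum n (fun l => rpow (f l) th * rpow (g l) (1 - th))
  <= rpow (fsum n f) th * rpow (fsum n g) (1 - th).
Proof.
  intros Hth Hf Hg; set (F := fsum n f); set (G := fsum n g).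
  assert (HF : 0 <= F) by (apply fsum_ge0; assumption).
  assert (HG : 0 <= G) by (apply fsum_ge0; assumption).
  pose proof (rpow_ge0 F th); pose proof (rpow_ge0 G (1 - th)).
  assert (Hdeg : F = 0 \/ G = 0 -> fsum n (fun l => rpow (f l) th * rpow (g l) (1 - th)) = 0).
  { intros HFG; rewrite (fsum_ext n _ (fun _ => 0 * 0)), fsum_scal; [ring |].
    intros l Hl; destruct HFG as [HF0 | HG0].
    - rewrite (fsum_eq0_term n f l Hf HF0 Hl), rpow_0; ring.
    - rewrite (fsum_eq0_term n g l Hg HG0 Hl), rpow_0; ring. }
  destruct (Req_dec F 0) as [HF0 | HF0]; [rewrite Hdeg by tauto; nra |].
  destruct (Req_dec G 0) as [HG0 | HG0]; [rewrite Hdeg by tauto; nra |].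
  set (K := rpow F th * rpow G (1 - th)).
  apply Rle_trans with (fsum n (fun l => K * (th * (/ F * f l) + (1 - th) * (/ G * g l)))).
  - apply fsum_le; intros l Hl.
    pose proof (Hf l Hl); pose proof (Hg l Hl).
    assert (0 < / F) by (apply Rinv_0_lt_compat; lra).
    assert (0 < / G) by (apply Rinv_0_lt_compat; lra).
    replace (f l) with (F * (/ F * f l)) at 1 by (field; assumption).
    replace (g l) with (G * (/ G * g l)) at 1 by (field; assumption).
    rewrite (rpow_mult_base F), (rpow_mult_base G) by nra.
    pose proof (weighted_amgm th (/ F * f l) (/ G * g l) Hth ltac:(nra) ltac:(nra)).
    assert (0 <= K) by (unfold K; nra).
    replace (rpow F th * rpow (/ F * f l) th * (rpow G (1 - th) * rpow (/ G * g l) (1 - th)))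
      with (K * (rpow (/ F * f l) th * rpow (/ G * g l) (1 - th))) by (unfold K; ring).
    apply Rmult_le_compat_l; assumption.
  - right; rewrite fsum_scal, fsum_plus.
    rewrite (fsum_scal n th (fun l => / F * f l)), (fsum_scal n (1 - th) (fun l => / G * g l)).
    rewrite !fsum_scal; fold F G; field; split; assumption.
Qed.

Lemma fsum_rpow_le_rpow_fsum n h k : 1 <= k -> (forall l, (l < n)%nat -> 0 <= h l) ->
  fsum n (fun l => rpow (h l) k) <= rpow (fsum n h) k.
Proof.
  intros Hk Hh; set (E := fsum n h).
  assert (HE : 0 <= E) by (apply fsum_ge0; assumption).
  destruct (Req_dec E 0) as [HE0 | HE0].
  { rewrite (fsum_ext n _ (fun _ => 0 * 0)), fsum_scal, Rmult_0_l by
      (intros l Hl; rewrite (fsum_eq0_term n h l Hh HE0 Hl), rpow_0; ring).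
    apply rpow_ge0. }
  (* each h l / E lies in [0, 1], where t^k <= t *)
  apply Rle_trans with (fsum n (fun l => rpow E k * (/ E * h l))).
  - apply fsum_le; intros l Hl; pose proof (Hh l Hl).
    assert (0 < / E) by (apply Rinv_0_lt_compat; lra).
    assert (h l <= E) by (apply fsum_ge_term; assumption).
    assert (/ E * h l <= 1) by (rewrite <- (Rinv_l E) by assumption; apply Rmult_le_compat_l; lra).
    replace (h l) with (E * (/ E * h l)) at 1 by (field; assumption).
    rewrite rpow_mult_base by nra.
    apply Rmult_le_compat_l; [apply rpow_ge0 |].
    rewrite <- (rpow_1 (/ E * h l)) at 2 by nra.
    apply rpow_decr_exp; [split |]; nra.
  - right; rewrite fsum_scal, fsum_scal; fold E; field; assumption.
Qed.

Definition lnorm (n : nat) (q : R) (v : nat -> R) : R :=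
  rpow (fsum n (fun m => rpow (Rabs (v m)) q)) (1 / q).

Lemma lnorm_ge0 n q v : 0 <= lnorm n q v.
Proof. apply rpow_ge0. Qed.

Lemma rpow_lnorm n q v : 0 < q -> rpow (lnorm n q v) q = fsum n (fun m => rpow (Rabs (v m)) q).
Proof.
  intros Hq; unfold lnorm; rewrite rpow_rpow; replace (1 / q * q) with 1 by (field; lra).
  apply rpow_1, fsum_ge0; intros; apply rpow_ge0.
Qed.

Lemma mat_norm_lnorm r s q u : 0 < q ->
  mat_norm r s q u = lnorm r q (fun l => lnorm s q (u l)).
Proof.
  intros Hq; unfold mat_norm, lnorm at 1; f_equal; apply fsum_ext; intros l _.
  rewrite Rabs_right by (apply Rle_ge, lnorm_ge0); symmetry; apply rpow_lnorm, Hq.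
Qed.

Lemma fsum_rpow_div_le1_of_lnorm_le n q v rho : 0 < q -> 0 < rho -> lnorm n q v <= rho ->
  fsum n (fun l => rpow (Rabs (v l) / rho) q) <= 1.
Proof.
  intros Hq Hrho Hv.
  assert (Hrq : 0 < rpow rho q) by (apply rpow_gt0, Hrho).
  rewrite (fsum_ext n _ (fun l => / rpow rho q * rpow (Rabs (v l)) q)), fsum_scal.
  - rewrite <- rpow_lnorm by exact Hq.
    apply (Rmult_le_reg_l (rpow rho q)); [exact Hrq |].
    rewrite <- Rmult_assoc, Rinv_r, Rmult_1_l, Rmult_1_r by lra.
    apply rpow_le_base; [lra | exact Hv].
  - intros l _; unfold Rdiv.
    rewrite rpow_mult_base, rpow_inv
      by (try apply Rabs_pos; try left; try apply Rinv_0_lt_compat; assumption).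
    ring.
Qed.

Lemma fsum_rpow_row_lnorm_div_le1 r s q u rho : 0 < q -> 0 < rho -> mat_norm r s q u <= rho ->
  fsum r (fun l => rpow (lnorm s q (u l) / rho) q) <= 1.
Proof.
  intros Hq Hrho Hu; rewrite mat_norm_lnorm in Hu by exact Hq.
  rewrite (fsum_ext r _ (fun l => rpow (Rabs (lnorm s q (u l)) / rho) q)).
  - apply fsum_rpow_div_le1_of_lnorm_le; assumption.
  - intros l _; rewrite Rabs_right by (apply Rle_ge, lnorm_ge0); reflexivity.
Qed.

Lemma fsum_mul_le_lnorm_dual_norm s q (v x : nat -> R) : 1 <= q ->
  (forall m, (m < s)%nat -> 0 <= v m) -> (forall m, (m < s)%nat -> 0 <= x m) ->
  fsum s (fun m => v m * x m) <= lnorm s q v * dual_norm s q x.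
Proof.
  intros Hq Hv Hx; unfold lnorm, dual_norm.
  destruct (Req_EM_T q 1) as [-> | Hq1].
  - replace (1 / 1) with 1 by field.
    rewrite (fsum_ext s (fun m => rpow (Rabs (v m)) 1) v)
      by (intros m Hm; pose proof (Hv m Hm); rewrite Rabs_right, rpow_1; lra).
    rewrite rpow_1 by (apply fsum_ge0, Hv).
    rewrite Rmult_comm, <- fsum_scal; apply fsum_le; intros m Hm.
    rewrite (Rmult_comm (fmax _ _)); apply Rmult_le_compat_l; [apply Hv, Hm |].
    pose proof (fmax_ge s (fun m => Rabs (x m)) m Hm) as H; cbv beta in H.
    rewrite Rabs_right in H by (apply Rle_ge, Hx, Hm); exact H.
  - set (q' := q / (q - 1)).
    replace (1 / q') with (1 - 1 / q) by (unfold q'; field; lra).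
    assert (Hth : 0 < 1 / q < 1).
    { split; [apply Rdiv_lt_0_compat |]; try lra.
      apply (Rmult_lt_reg_r q); [lra |]; unfold Rdiv; rewrite Rmult_assoc, Rinv_l; lra. }
    eapply Rle_trans; [| apply fsum_holder; [exact Hth | |]; intros; apply rpow_ge0].
    right; apply fsum_ext; intros m Hm; rewrite !rpow_rpow.
    replace (q * (1 / q)) with 1 by (field; lra).
    replace (q' * (1 - 1 / q)) with 1 by (unfold q'; field; lra).
    pose proof (Hv m Hm); pose proof (Hx m Hm).
    rewrite !Rabs_right, !rpow_1 by lra; reflexivity.
Qed.

Lemma fminP_spec n P a :
  match fminP n P a with
  | Some v => (exists l, (l < n)%nat /\ P l = true /\ v = a l) /\
              (forall l, (l < n)%nat -> P l = true -> v <= a l)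
  | None => forall l, (l < n)%nat -> P l = false
  end.
Proof.
  induction n; simpl; [intros; lia |].
  destruct (fminP n P a) as [v |]; destruct (P n) eqn:Pn.
  - destruct IHn as [[l [Hl [Pl ->]]] Hmin]; split.
    + unfold Rmin; destruct Rle_dec; [exists l | exists n]; repeat split; auto; lia.
    + intros l' Hl' Pl'; destruct (Nat.eq_dec l' n) as [-> | ]; [apply Rmin_r |].
      pose proof (Hmin l' ltac:(lia) Pl'); pose proof (Rmin_l (a l) (a n)); lra.
  - destruct IHn as [[l [Hl [Pl ->]]] Hmin]; split.
    + exists l; repeat split; auto; lia.
    + intros l' Hl' Pl'; destruct (Nat.eq_dec l' n) as [-> | ]; [congruence |].
      apply Hmin; [lia | exact Pl'].
  - split; [exists n; repeat split; auto |].
    intros l' Hl' Pl'; destruct (Nat.eq_dec l' n) as [-> | ]; [lra |].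
    rewrite IHn in Pl'; [discriminate | lia].
  - intros l Hl; destruct (Nat.eq_dec l n) as [-> | ]; [exact Pn | apply IHn; lia].
Qed.

Lemma inJ_true alpha p q l : inJ alpha p q l = true -> alpha l * p < q.
Proof. unfold inJ; destruct Rlt_dec; [auto | discriminate]. Qed.

Lemma inJ_false alpha p q l : inJ alpha p q l = false -> q <= alpha l * p.
Proof. unfold inJ; destruct Rlt_dec; [discriminate | lra]. Qed.

Lemma alpha_bar_mul_lt r alpha p q : 0 < q -> alpha_bar r alpha p q * p < q.
Proof.
  intros Hq; pose proof (fminP_spec r (inJ alpha p q) alpha) as S; unfold alpha_bar.
  destruct (fminP r (inJ alpha p q) alpha) as [v |]; [| lra].
  destruct S as [[l [_ [Pl ->]]] _]; apply inJ_true, Pl.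
Qed.

Lemma alpha_bar_le r alpha p q l : (l < r)%nat -> inJ alpha p q l = true ->
  alpha_bar r alpha p q <= alpha l.
Proof.
  intros Hl Pl; pose proof (fminP_spec r (inJ alpha p q) alpha) as S; unfold alpha_bar.
  destruct (fminP r (inJ alpha p q) alpha) as [v |].
  - apply S; assumption.
  - rewrite S in Pl by exact Hl; discriminate.
Qed.

Lemma alpha_bar_ge0 r alpha p q : (forall l, (l < r)%nat -> 0 <= alpha l) ->
  0 <= alpha_bar r alpha p q.
Proof.
  intros Ha; pose proof (fminP_spec r (inJ alpha p q) alpha) as S; unfold alpha_bar.
  destruct (fminP r (inJ alpha p q) alpha) as [v |]; [| lra].
  destruct S as [[l [Hl [_ ->]]] _]; apply Ha, Hl.
Qed.

Lemma alpha_bar_exponent_bounds r alpha p q : 0 < p -> 0 < q ->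
  (forall l, (l < r)%nat -> 0 <= alpha l) ->
  0 < 1 - alpha_bar r alpha p q * p / q <= 1.
Proof.
  intros Hp Hq Ha.
  pose proof (alpha_bar_mul_lt r alpha p q Hq); pose proof (alpha_bar_ge0 r alpha p q Ha).
  split.
  - apply (Rmult_lt_reg_r q); [exact Hq |].
    unfold Rdiv; rewrite Rmult_minus_distr_r, Rmult_assoc, Rinv_l; lra.
  - assert (0 <= alpha_bar r alpha p q * p / q)
      by (apply Rmult_le_pos; [nra | left; apply Rinv_0_lt_compat, Hq]).
    lra.
Qed.

(* Psi depends on (delta, t) only through d_l = delta_l t^alpha_l, and on alpha only through
   J and the exponent th = 1 - alpha_bar p / q; then p q / (q - alpha_bar p) = p / th. *)
Definition psi_norm (r : nat) (P : nat -> bool) (p th : R) (d : nat -> R) : R :=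
  rpow (rpow (fsum r (fun l => if P l then rpow (d l) (p / th) else 0)) th
        + fmax r (fun j => if P j then 0 else rpow (d j) p)) (1 / p).

Lemma Psi_psi_norm r alpha p q delta t : 0 < p -> 0 < q ->
  Psi r alpha p q delta t
  = psi_norm r (inJ alpha p q) p (1 - alpha_bar r alpha p q * p / q)
      (fun l => delta l * rpow t (alpha l)).
Proof.
  intros Hp Hq; unfold Psi, psi_norm.
  pose proof (alpha_bar_mul_lt r alpha p q Hq).
  replace (p / (1 - alpha_bar r alpha p q * p / q))
    with (p * q / (q - alpha_bar r alpha p q * p)) by (field; lra).
  reflexivity.
Qed.

Lemma psi_norm_le_compat r P p th d d' : 0 < p -> 0 < th ->
  (forall l, (l < r)%nat -> d l <= d' l) -> psi_norm r P p th d <= psi_norm r P p th d'.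
Proof.
  intros Hp Hth Hd; unfold psi_norm.
  assert (0 <= p / th) by (left; apply Rdiv_lt_0_compat; assumption).
  apply rpow_le_base; [left; apply Rdiv_lt_0_compat; lra |].
  apply Rplus_le_compat.
  - apply rpow_le_base; [lra |]; apply fsum_le; intros l Hl.
    destruct (P l); [apply rpow_le_base, Hd | lra]; assumption.
  - apply fmax_le; intros l Hl.
    destruct (P l); [lra | apply rpow_le_base, Hd; [lra | assumption]].
Qed.

Lemma psi_norm_le_fsum r P p th d : 1 <= p -> 0 < th <= 1 ->
  (forall l, (l < r)%nat -> 0 <= d l) -> psi_norm r P p th d <= fsum r d.
Proof.
  intros Hp Hth Hd; unfold psi_norm.
  set (h := fun l => if P l then rpow (d l) p else 0).
  assert (Hh : forall l, (l < r)%nat -> 0 <= h l)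
    by (intros; unfold h; destruct (P l); [apply rpow_ge0 | lra]).
  assert (HJ : rpow (fsum r (fun l => if P l then rpow (d l) (p / th) else 0)) th <= fsum r h).
  { rewrite (fsum_ext r _ (fun l => rpow (h l) (/ th))).
    - rewrite <- (rpow_rpow_inv (fsum r h) (/ th)), Rinv_inv by
        (try apply Rinv_0_lt_compat; try apply fsum_ge0; tauto).
      apply rpow_le_base; [lra |].
      apply fsum_rpow_le_rpow_fsum; [| exact Hh].
      rewrite <- Rinv_1; apply Rinv_le_contravar; lra.
    - intros l _; unfold h; destruct (P l); [| symmetry; apply rpow_0].
      rewrite rpow_rpow; reflexivity. }
  apply Rle_trans with (rpow (fsum r (fun l => rpow (d l) p)) (1 / p)).
  - apply rpow_le_base; [left; apply Rdiv_lt_0_compat; lra |].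
    pose proof (fsum_mask_plus_fmax_le r P (fun l => rpow (d l) p) ltac:(intros; apply rpow_ge0)).
    unfold h in HJ; lra.
  - rewrite <- (rpow_rpow_inv (fsum r d) p) by (try apply fsum_ge0; assumption || lra).
    replace (/ p) with (1 / p) by (field; lra).
    apply rpow_le_base; [left; apply Rdiv_lt_0_compat; lra |].
    apply fsum_rpow_le_rpow_fsum; assumption.
Qed.

Section SumOfPowersAtMostOne.

Variables (n : nat) (P : nat -> bool) (q : R) (b : nat -> R).
Hypothesis Hq : 0 < q.
Hypothesis Hb : forall l, (l < n)%nat -> 0 <= b l.
Hypothesis Hbq : fsum n (fun l => rpow (b l) q) <= 1.

Lemma le1_of_fsum_rpow_le1 l : (l < n)%nat -> b l <= 1.
Proof.
  intros Hl; apply (rpow_le1 _ q Hq (Hb l Hl)).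
  eapply Rle_trans; [| exact Hbq].
  apply (fsum_ge_term n (fun l => rpow (b l) q)); [intros; apply rpow_ge0 | exact Hl].
Qed.

Lemma fsum_mask_holder_le th c : 0 < th <= 1 -> (forall l, (l < n)%nat -> 0 <= c l) ->
  fsum n (fun l => if P l then c l * rpow (b l) ((1 - th) * q) else 0)
  <= rpow (fsum n (fun l => if P l then rpow (c l) (/ th) else 0)) th.
Proof.
  intros [Hth0 [Hth1 | ->]] Hc.
  - set (F := fun l => if P l then rpow (c l) (/ th) else 0).
    set (G := fun l => if P l then rpow (b l) q else 0).
    assert (HG : 0 <= fsum n G)
      by (apply fsum_ge0; intros; unfold G; destruct (P l); [apply rpow_ge0 | lra]).
    rewrite (fsum_ext n _ (fun l => rpow (F l) th * rpow (G l) (1 - th))).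
    + eapply Rle_trans;
        [apply fsum_holder; [lra | |];
         intros; unfold F, G; destruct (P l); try apply rpow_ge0; lra |].
      rewrite <- (Rmult_1_r (rpow (fsum n F) th)) at 2.
      apply Rmult_le_compat_l; [apply rpow_ge0 |].
      apply Rle_trans with (rpow 1 (1 - th));
        [apply rpow_le_base; [lra |] | rewrite rpow_base1; lra].
      eapply Rle_trans; [| exact Hbq].
      apply fsum_le; intros; unfold G; destruct (P l); [lra | apply rpow_ge0].
    + intros l Hl; unfold F, G; destruct (P l); [| rewrite rpow_0; ring].
      rewrite !rpow_rpow, Rinv_l, rpow_1 by (try apply Hc, Hl; lra).
      rewrite (Rmult_comm q); reflexivity.
  - rewrite Rminus_diag, Rmult_0_l, Rinv_1, rpow_1
      by (apply fsum_ge0; intros; destruct (P l); try apply rpow_ge0; lra).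
    apply fsum_le; intros l Hl; destruct (P l); [| lra].
    rewrite rpow_1 by (apply Hc, Hl).
    pose proof (rpow_exp0_le1 (b l)); pose proof (Hc l Hl).
    rewrite <- (Rmult_1_r (c l)) at 2; apply Rmult_le_compat_l; assumption.
Qed.

Lemma fsum_mask_fmax_le c :
  fsum n (fun l => if P l then 0 else c l * rpow (b l) q)
  <= fmax n (fun l => if P l then 0 else c l).
Proof.
  set (M := fmax n (fun l => if P l then 0 else c l)).
  assert (HM : 0 <= M) by apply fmax_ge0.
  apply Rle_trans with (fsum n (fun l => M * rpow (b l) q)).
  - apply fsum_le; intros l Hl.
    pose proof (fmax_ge n (fun l => if P l then 0 else c l) l Hl) as H; fold M in H; cbv beta in H.
    pose proof (rpow_ge0 (b l) q).
    destruct (P l); [nra | apply Rmult_le_compat_r; assumption].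
  - rewrite fsum_scal; rewrite <- (Rmult_1_r M) at 2; apply Rmult_le_compat_l; assumption.
Qed.

End SumOfPowersAtMostOne.

Lemma fsum_rows_le_psi_norm r (P : nat -> bool) p q th (alpha delta y b : nat -> R) T :
  0 < p -> 0 < q -> 0 < th <= 1 -> 0 <= T ->
  (forall l, (l < r)%nat -> 0 <= alpha l) -> (forall l, (l < r)%nat -> 0 <= delta l) ->
  (forall l, (l < r)%nat -> 0 <= b l) -> fsum r (fun l => rpow (b l) q) <= 1 ->
  (forall l, (l < r)%nat -> 0 <= y l <= b l * T) ->
  (forall l, (l < r)%nat -> P l = true -> (1 - th) * q <= p * alpha l) ->
  (forall l, (l < r)%nat -> P l = false -> q <= p * alpha l) ->
  rpow (fsum r (fun l => rpow (delta l) p * rpow (y l) (p * alpha l))) (1 / p)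
  <= psi_norm r P p th (fun l => delta l * rpow T (alpha l)).
Proof.
  intros Hp Hq Hth HT Ha Hd Hb Hbq Hy HJ HJc; unfold psi_norm.
  apply rpow_le_base; [left; apply Rdiv_lt_0_compat; lra |].
  set (c := fun l => rpow (delta l * rpow T (alpha l)) p).
  assert (Hc : forall l, (l < r)%nat -> 0 <= c l) by (intros; apply rpow_ge0).
  apply Rle_trans with (fsum r (fun l =>
    (if P l then c l * rpow (b l) ((1 - th) * q) else 0)
    + (if P l then 0 else c l * rpow (b l) q))).
  - apply fsum_le; intros l Hl.
    pose proof (Ha l Hl); pose proof (Hd l Hl); pose proof (Hb l Hl); pose proof (Hy l Hl).
    eapply Rle_trans; [apply (rpow_mul_rpow_le_scaled _ _ (b l) T); lra |]; fold (c l).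
    assert (b l <= 1) by (apply (le1_of_fsum_rpow_le1 r q b); assumption).
    destruct (P l) eqn:Pl; rewrite ?Rplus_0_l, ?Rplus_0_r;
      (apply Rmult_le_compat_l; [apply Hc, Hl | apply rpow_decr_exp; [lra |]]).
    + apply HJ; assumption.
    + apply HJc; assumption.
  - rewrite fsum_plus; apply Rplus_le_compat.
    + rewrite (fsum_ext r (fun l => if P l then rpow (delta l * rpow T (alpha l)) (p / th) else 0)
                          (fun l => if P l then rpow (c l) (/ th) else 0))
        by (intros l _; unfold c; rewrite rpow_rpow; reflexivity).
      apply fsum_mask_holder_le; assumption.
    + apply fsum_mask_fmax_le; exact Hbq.
Qed.

Lemma row_sums_le_Psi r s alpha p pu rhou delta (x : nat -> R) (u : nat -> nat -> R) :
  (forall l, (l < r)%nat -> 0 <= alpha l) -> 0 < p -> 1 <= pu -> 0 < rhou ->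
  (forall l, (l < r)%nat -> 0 <= delta l) ->
  (forall m, (m < s)%nat -> 0 <= x m) ->
  (forall l m, (l < r)%nat -> (m < s)%nat -> 0 <= u l m) ->
  mat_norm r s pu u <= rhou ->
  rpow (fsum r (fun l => rpow (delta l) p *
                         rpow (fsum s (fun m => u l m * x m)) (p * alpha l))) (1 / p)
  <= Psi r alpha p pu delta (rhou * dual_norm s pu x).
Proof.
  intros Ha Hp Hpu Hrho Hd Hx Hu Hnorm.
  set (N := dual_norm s pu x).
  assert (HN : 0 <= N)
    by (unfold N, dual_norm; destruct Req_EM_T; [apply fmax_ge0 | apply rpow_ge0]).
  rewrite Psi_psi_norm by lra.
  apply fsum_rows_le_psi_norm with (q := pu) (b := fun l => lnorm s pu (u l) / rhou);
    try lra; try assumption.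
  - apply alpha_bar_exponent_bounds; [lra | lra | exact Ha].
  - apply Rmult_le_pos; lra.
  - intros l _; apply Rmult_le_pos; [apply lnorm_ge0 | left; apply Rinv_0_lt_compat, Hrho].
  - apply fsum_rpow_row_lnorm_div_le1; [lra | exact Hrho | exact Hnorm].
  - intros l Hl; split.
    + apply fsum_ge0; intros m Hm; apply Rmult_le_pos; [apply Hu | apply Hx]; assumption.
    + replace (lnorm s pu (u l) / rhou * (rhou * N)) with (lnorm s pu (u l) * N) by (field; lra).
      apply fsum_mul_le_lnorm_dual_norm; [lra | |]; intros m Hm; [apply Hu | apply Hx]; assumption.
  - intros l Hl Pl; pose proof (alpha_bar_le r alpha p pu l Hl Pl).
    replace ((1 - (1 - alpha_bar r alpha p pu * p / pu)) * pu) with (alpha_bar r alpha p pu * p)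
      by (field; lra).
    nra.
  - intros l _ Pl; pose proof (inJ_false alpha p pu l Pl); lra.
Qed.

Theorem mainTheorem9 (r s : nat) (alpha : nat -> R) (p pu rhou : R)
  (delta : nat -> R) :
  (forall l, (l < r)%nat -> 0 < alpha l) ->
  1 <= p -> 1 <= pu -> 0 < rhou ->
  (forall l, (l < r)%nat -> 0 < delta l) ->
  (forall (x : nat -> R) (u : nat -> nat -> R),
     (forall m, (m < s)%nat -> 0 <= x m) ->
     (forall l m, (l < r)%nat -> (m < s)%nat -> 0 < u l m) ->
     mat_norm r s pu u <= rhou ->
     rpow (fsum r (fun l => rpow (delta l) p *
                            rpow (fsum s (fun m => u l m * x m)) (p * alpha l)))
          (1 / p)
     <= Psi r alpha p pu delta (rhou * dual_norm s pu x))
  /\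
  (forall (delta' : nat -> R) (t t' : R),
     (forall l, (l < r)%nat -> delta l <= delta' l) ->
     0 < t -> t <= t' ->
     Psi r alpha p pu delta t <= Psi r alpha p pu delta' t'
     /\ Psi r alpha p pu delta' t' <= fsum r (fun l => delta' l * rpow t' (alpha l))).
Proof.
  intros Ha Hp Hpu Hrho Hd.
  assert (Ha0 : forall l, (l < r)%nat -> 0 <= alpha l) by (intros; left; apply Ha; assumption).
  split.
  - intros x u Hx Hu Hnorm; apply row_sums_le_Psi; try lra; try assumption.
    + intros; left; apply Hd; assumption.
    + intros; left; apply Hu; assumption.
  - intros delta' t t' Hdd Ht Htt.
    pose proof (alpha_bar_exponent_bounds r alpha p pu ltac:(lra) ltac:(lra) Ha0).
    rewrite !Psi_psi_norm by lra.
    split; [apply psi_norm_le_compat | apply psi_norm_le_fsum]; try lra.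
    + intros l Hl; pose proof (Hd l Hl); pose proof (Hdd l Hl).
      apply Rmult_le_compat; try lra; try apply rpow_ge0.
      apply rpow_le_base; [apply Ha0 |]; assumption.
    + intros l Hl; pose proof (Hd l Hl); pose proof (Hdd l Hl).
      apply Rmult_le_pos; [lra | apply rpow_ge0].
Qed.
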